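(* For every positive constant $\varepsilon$, there is a deterministic Congested Clique algorithm which, on an input graph $G$ with arboricity $a\ge 2$, partitions the edge set of $G$ into $O(a^{1+\varepsilon})$ forests, each vertex knowing the label and orientation (towards its parent) of each incident edge, with each vertex having at most one parent in each forest, within $O(1)$ rounds.
   Context: Congested Clique model: there are $n$ processors (vertices) with distinct IDs of $O(\log n)$ bits; computation proceeds in synchronous rounds; in each round every pair of vertices may exchange a message of $O(\log n)$ bits; local computation is free. The input is a graph $G=(V,E')$ on the same vertex set; each vertex initially knows its incident edges in $G$, and $a$ is known to all vertices. The arboricity of a graph is the minimum number of forests whose union covers its edge set. *)

From mathcomp Require Import all_boot.
Set Implicit Arguments. Unset Strict Implicit. Unset Printing Implicit Defensive.

Definition forest (n : nat) (F : rel 'I_n) : Prop :=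
  ~ exists s : seq 'I_n, [/\ 2 < size s, uniq s & cycle F s].

Definition covered_by_forests (n : nat) (G : rel 'I_n) (k : nat) : Prop :=
  exists F : 'I_k -> rel 'I_n,
    (forall i, symmetric (F i)) /\
    (forall i u v, F i u v -> G u v) /\
    (forall i, forest (F i)) /\
    (forall u v, G u v -> exists i, F i u v).

Definition has_arboricity (n : nat) (G : rel 'I_n) (a : nat) : Prop :=
  covered_by_forests G a /\ (forall k, covered_by_forests G k -> a <= k).

Definition nbr (n : nat) (G : rel 'I_n) (v : 'I_n) : {ffun 'I_n -> bool} :=
  [ffun u => G v u].

(* History of a vertex: for each completed round, the message (a nat) it
   received from each vertex. *)
Definition history (n : nat) := seq {ffun 'I_n -> nat}.

(* A deterministic algorithm for n processors (n and a are known to all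
   vertices, so the algorithm may depend on them).  A vertex's local
   knowledge is its ID v, its incident edges, and everything received so far.
   [send v N h u] = message v sends to u in the next round.
   [output v N h u] = (forest label, "u is my parent") for incident edge {v,u}. *)
Record algorithm (n : nat) := Algorithm {
  send : 'I_n -> {ffun 'I_n -> bool} -> history n -> 'I_n -> nat;
  output : 'I_n -> {ffun 'I_n -> bool} -> history n -> 'I_n -> nat * bool
}.

Fixpoint hist (n : nat) (A : algorithm n) (G : rel 'I_n) (r : nat)
  : 'I_n -> history n :=
  match r with
  | 0 => fun _ => [::]
  | r'.+1 => fun v =>
      rcons (hist A G r' v)
            [ffun u => send A u (nbr G u) (hist A G r' u) v]
  end.

(* Every message sent in the first R rounds has O(log n) bits, namely it is
   a number below (n+1)^c, i.e. at most c*log2(n+1) bits. *)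
Definition bandwidth_ok (n : nat) (A : algorithm n) (G : rel 'I_n)
  (R c : nat) : Prop :=
  forall r, r < R -> forall u v : 'I_n,
    send A u (nbr G u) (hist A G r u) v < (n.+1) ^ c.

Definition out (n : nat) (A : algorithm n) (G : rel 'I_n) (R : nat)
  (v u : 'I_n) : nat * bool :=
  output A v (nbr G v) (hist A G R v) u.

Definition forest_decomposition_ok (n : nat) (A : algorithm n)
  (G : rel 'I_n) (R K : nat) : Prop :=
  let o := out A G R in
  [/\ (forall v u, G v u -> (o v u).1 < K),
      (forall v u, G v u -> (o v u).1 = (o u v).1 /\ (o v u).2 = ~~ (o u v).2),
      (forall v u w, G v u -> G v w -> (o v u).1 = (o v w).1 ->
          (o v u).2 -> (o v w).2 -> u = w)
    & (forall i, forest (fun u v => G u v && ((o u v).1 == i)))].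

From mathcomp Require Import all_boot zify.
Set Implicit Arguments. Unset Strict Implicit. Unset Printing Implicit Defensive.

(* Fix k and a threshold t with (2a)^(k+1) <= t^k, so t is about
   (2a)^(1+1/k).  Repeatedly deleting the vertices of degree <= t in the
   remaining graph (the peeling of Barenboim and Elkin) shrinks the vertex set
   by a factor 2a/t per round, because every subgraph of a graph of arboricity
   a has average degree below 2a.  After k rounds, each computable with one
   broadcast bit per vertex, the remaining core S = peel k has at most
   (2a/t)^k n vertices and hence at most n incident edge-endpoints, so G[S]
   can be made known to every vertex in O(1) further rounds; every vertex then
   knows the complete peeling and thus the level of each vertex.  Orient each
   edge towards the endpoint of larger key (level, ID): a vertex has at most t
   such parents, and labelling each edge by the rank of the parent among them
   yields t label classes, each a forest, since on a cycle the vertex of least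
   key would have two parents with the same label. *)

Definition deg_in n (E : rel 'I_n) (U : {set 'I_n}) v := #|[set w in U | E v w]|.

Lemma sum_indicator_card (T : finType) (A : {set T}) (P : pred T) :
  \sum_(w in A) (P w : nat) = #|[set w in A | P w]|.
Proof.
rewrite -sum1_card big_mkcond [RHS]big_mkcond /=.
by apply: eq_bigr => i _; rewrite !inE; case: (i \in A); case: (P i).
Qed.

Lemma leq_sum_subset (T : finType) (A B : {set T}) (f : T -> nat) :
  A \subset B -> \sum_(x in A) f x <= \sum_(x in B) f x.
Proof.
move=> sAB; rewrite [X in _ <= X](big_setID A) /= (setIidPr sAB).
exact: leq_addr.
Qed.

Lemma deg_inD1 n (E : rel 'I_n) (U : {set 'I_n}) v w : v \in U ->
  deg_in E U w = E w v + deg_in E (U :\ v) w.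
Proof.
move=> Uv; rewrite /deg_in (cardsD1 v) !inE Uv /=; congr (_ + _).
by apply: eq_card => z; rewrite !inE andbA.
Qed.

Section Forest.
Variables (n : nat) (F : rel 'I_n).
Hypotheses (Fsym : symmetric F) (Firr : irreflexive F) (Fforest : forest F).

Lemma forest_path_no_chord x s w : uniq (x :: s) -> path F x s ->
  w \in s -> w != head x s -> ~~ F x w.
Proof.
move=> xs_uniq xs_path sw w_head; apply/negP => Fxw; apply: Fforest.
set i := index w s.
have i_lt : i < size s by rewrite index_mem.
have i_gt0 : 0 < i.
  rewrite lt0n; apply/eqP => i0; move: w_head.
  by rewrite -(nth_index x sw) -/i i0 nth0 eqxx.
exists (x :: take i.+1 s); split.
- by rewrite /= size_take; case: ifP => _; rewrite !ltnS //; exact: leq_ltn_trans i_gt0 i_lt.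
- exact: (take_uniq i.+2 xs_uniq).
- rewrite /= rcons_path take_path //=.
  have -> : last x (take i.+1 s) = w.
    by rewrite -nth_last size_takel //= nth_take // nth_index.
  by rewrite Fsym.
Qed.

Lemma forest_path_extend (U : {set 'I_n}) x s : uniq (x :: s) -> path F x s ->
  1 < deg_in F U x -> exists2 w, w \in U & (w \notin x :: s) && F x w.
Proof.
move=> xs_uniq xs_path degx.
have : 0 < #|[set w in U | F x w] :\ head x s|.
  move: degx; rewrite /deg_in (cardsD1 (head x s)).
  by case: (_ \in _); rewrite ?add1n ?add0n // => /ltnW.
case/card_gt0P => w; rewrite !inE => /andP[w_head /andP[Uw Fxw]].
exists w => //; rewrite Fxw andbT inE negb_or; apply/andP; split.
  by apply: contraTneq Fxw => ->; rewrite Firr.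
by apply: contraL Fxw => sw; exact: forest_path_no_chord xs_uniq xs_path sw w_head.
Qed.

(* Extend a simple path x :: s inside U at its end x until x has degree <= 1 in
   U; this terminates since the path cannot exceed #|U| vertices. *)
Lemma forest_path_leaf (U : {set 'I_n}) m x s : #|U| - size (x :: s) <= m ->
  uniq (x :: s) -> all (mem U) (x :: s) -> path F x s ->
  exists2 v, v \in U & deg_in F U v <= 1.
Proof.
elim: m x s => [|m IH] x s Um xs_uniq xs_U xs_path;
  (case: (leqP (deg_in F U x) 1) => [degx|]; first by exists x => //; case/andP: xs_U);
  case/(forest_path_extend xs_uniq xs_path) => w Uw /andP[w_new Fxw].
- have : size (w :: x :: s) <= #|U|.
    rewrite -(card_uniqP (_ : uniq (w :: x :: s))); last by rewrite /= w_new.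
    apply: subset_leq_card; apply/subsetP => z; rewrite inE => /orP[/eqP->//|].
    by move/allP: xs_U => /[apply].
  by move: Um => /=; lia.
- apply: (IH w (x :: s)) => /=.
  + by move: Um => /=; lia.
  + by rewrite w_new.
  + by rewrite Uw.
  + by rewrite Fsym Fxw.
Qed.

Lemma forest_has_leaf (U : {set 'I_n}) : U != set0 ->
  exists2 v, v \in U & deg_in F U v <= 1.
Proof.
case/set0Pn => x Ux.
by apply: (@forest_path_leaf U #|U| x [::]) => //=; rewrite ?Ux //; lia.
Qed.

(* Removing a leaf v of a forest removes at most one edge. *)
Lemma forest_deg_sum (U : {set 'I_n}) : U != set0 ->
  \sum_(v in U) deg_in F U v + 2 <= 2 * #|U|.
Proof.
move: {2}#|U| (leqnn #|U|) => m; elim: m U => [|m IH] U Um U0.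
  by move: U0; rewrite -card_gt0; lia.
have [v Uv degv] := forest_has_leaf U0.
rewrite (big_setD1 v Uv) /= [#|U|](cardsD1 v U) Uv.
have -> : \sum_(w in U :\ v) deg_in F U w =
    \sum_(w in U :\ v) (F w v : nat) + \sum_(w in U :\ v) deg_in F (U :\ v) w.
  by rewrite -big_split; apply: eq_bigr => w _; apply: deg_inD1.
rewrite sum_indicator_card.
have nbrs_v : #|[set w in U :\ v | F w v]| <= deg_in F U v.
  apply: subset_leq_card; apply/subsetP => w; rewrite !inE Fsym.
  by case/andP=> /andP[_ ->] ->.
case: (eqVneq (U :\ v) set0) => [U'0|U'0].
  have deg0 : deg_in F U v = 0.
    rewrite (deg_inD1 F v Uv) Firr U'0 /deg_in; apply/eqP; rewrite cards_eq0.
    by apply/eqP/setP => z; rewrite !inE.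
  by move: nbrs_v; rewrite U'0 big_set0 cards0 deg0; lia.
have U'm : #|U :\ v| <= m by move: Um; rewrite (cardsD1 v U) Uv; lia.
by have := IH _ U'm U'0; move: nbrs_v degv; lia.
Qed.

End Forest.

Lemma eq_forest n (F F' : rel 'I_n) : forest F' -> F =2 F' -> forest F.
Proof.
move=> F'forest FF' [s [s_size s_uniq s_cycle]]; apply: F'forest; exists s; split => //.
by move: s_cycle; rewrite /cycle; case: s {s_size s_uniq} => // x s; rewrite (eq_path FF').
Qed.

Lemma arboricity_deg_sum n (G : rel 'I_n) a : irreflexive G -> covered_by_forests G a ->
  forall U : {set 'I_n}, \sum_(v in U) deg_in G U v + 2 * a * (U != set0) <= 2 * a * #|U|.
Proof.
move=> Girr [F [Fsym [FG [Fforest Fcover]]]] U.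
have Firr i : irreflexive (F i) by move=> x; apply/negP => /FG; rewrite Girr.
have deg_split v : deg_in G U v <= \sum_(i < a) deg_in (F i) U v.
  rewrite /deg_in -sum_indicator_card.
  have -> : \sum_(i < a) #|[set w in U | F i v w]| =
      \sum_(i < a) \sum_(w in U) (F i v w : nat).
    by apply: eq_bigr => i _; rewrite sum_indicator_card.
  rewrite exchange_big /=; apply: leq_sum => w _.
  case Gvw: (G v w) => //=; have [i Fivw] := Fcover _ _ Gvw.
  by rewrite (bigD1 i) //= Fivw.
case: (eqVneq U set0) => [->|U0]; first by rewrite big_set0 cards0.
have : \sum_(i < a) (\sum_(v in U) deg_in (F i) U v + 2) <= \sum_(i < a) 2 * #|U|.
  by apply: leq_sum => i _; apply: forest_deg_sum.
rewrite big_split /= !sum_nat_const card_ord.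
have : \sum_(v in U) deg_in G U v <= \sum_(i < a) \sum_(v in U) deg_in (F i) U v.
  by rewrite exchange_big /=; apply: leq_sum => v _; apply: deg_split.
rewrite /=; lia.
Qed.

Lemma count_iota_downclosed (P : pred nat) N : P 0 -> (forall j, P j.+1 -> P j) ->
  forall m, m <= N -> P m = (m <= count P (iota 1 N)).
Proof.
move=> P0 Pdown; elim: N => [|N IH] m mN; first by move: mN; rewrite leqn0 => /eqP->.
have Pbelow j : P N.+1 -> j <= N.+1 -> P j.
  move=> + jN; rewrite -(subnK jN); elim: (N.+1 - j) => [|d IHd] //.
  by rewrite addSn => /Pdown.
rewrite -[N.+1]addn1 iotaD count_cat /= add1n addn0.
case PN: (P N.+1) => /=.
  rewrite (@eq_in_count _ _ predT); last first.
    by move=> j; rewrite mem_iota add1n => /andP[_ /ltnW]; apply: Pbelow.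
  by rewrite count_predT size_iota (Pbelow m PN) // addn1 mN.
rewrite addn0; case: (ltnP m N.+1) => mN'; first by rewrite IH.
have -> : m = N.+1 by apply/eqP; rewrite eqn_leq mN mN'.
by rewrite PN ltnNge (leq_trans (count_size _ _)) ?size_iota.
Qed.

Fixpoint peel_from n t (E : rel 'I_n) (A : {set 'I_n}) j : {set 'I_n} :=
  if j is j'.+1 then
    [set v in peel_from t E A j' | t < deg_in E (peel_from t E A j') v]
  else A.

Definition peel n t (E : rel 'I_n) j := peel_from t E setT j.

(* The level of v is the number of peeling rounds it survives; [key] orders the
   vertices by (level, ID). *)
Definition level n t (E : rel 'I_n) v := count (fun j => v \in peel t E j) (iota 1 n).
Definition key n t (E : rel 'I_n) (v : 'I_n) := level t E v * n + v.

Section PeelFrom.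
Variables (n t : nat).
Implicit Types (E : rel 'I_n) (A : {set 'I_n}).

Lemma peel_fromS E A j : peel_from t E A j.+1 \subset peel_from t E A j.
Proof. by apply/subsetP => v; rewrite inE => /andP[]. Qed.

Lemma peel_from_leq E A i j : i <= j -> peel_from t E A j \subset peel_from t E A i.
Proof.
move=> ij; rewrite -(subnK ij); elim: (j - i) => [|d IH] //=.
exact: subset_trans (peel_fromS _ _ _) IH.
Qed.

Lemma peel_from_sub E A j : peel_from t E A j \subset A.
Proof. exact: (@peel_from_leq E A 0 j). Qed.

Lemma peel_fromD E A i j : peel_from t E A (i + j) = peel_from t E (peel_from t E A i) j.
Proof. by elim: j => [|j IH]; rewrite ?addn0 // addnS /= IH. Qed.

Lemma eq_peel_from E E' A : {in A &, E =2 E'} ->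
  forall j, peel_from t E A j = peel_from t E' A j.
Proof.
move=> EE'; elim=> [|j IH] //=; rewrite IH; apply/setP => v; rewrite !inE.
case Pv: (v \in peel_from t E' A j) => //=.
congr (_ < _); apply: eq_card => w; rewrite !inE.
case Pw: (w \in peel_from t E' A j) => //=.
by apply: EE'; apply: (subsetP (peel_from_sub E' A j)).
Qed.

End PeelFrom.

Section Levels.
Variables (n t : nat) (E : rel 'I_n).

Lemma peel_level v m : m <= n -> (v \in peel t E m) = (m <= level t E v).
Proof.
move=> mn; apply: (count_iota_downclosed (P := fun j => v \in peel t E j)) => // j.
exact: (subsetP (peel_fromS _ _ _ _)).
Qed.

Lemma mem_peel v m : peel t E n = set0 -> (v \in peel t E m) = (m <= level t E v).
Proof.
move=> peel_n0; case: (leqP m n) => mn; first exact: peel_level.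
have : level t E v < n by rewrite ltnNge -peel_level // peel_n0 inE.
move=> /(ltn_trans)/(_ mn); rewrite ltnNge => /negbTE->.
apply/negbTE/negP => /(subsetP (peel_from_leq t E setT (ltnW mn))).
by rewrite -/(peel t E n) peel_n0 inE.
Qed.

Lemma key_inj : injective (key t E).
Proof.
move=> x y /(congr1 (modn^~ n)); rewrite /key !modnMDl !modn_small //.
exact: val_inj.
Qed.

Lemma lex_ltn L1 L2 x z : L1 < L2 -> x < n -> L1 * n + x < L2 * n + z.
Proof.
move=> L12 xn; apply: (@leq_trans (L1.+1 * n)); first by rewrite mulSn addnC ltn_add2r.
by rewrite (leq_trans _ (leq_addr _ _)) // leq_mul2r L12 orbT.
Qed.

Lemma level_lt_key x y : level t E x < level t E y -> key t E x < key t E y.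
Proof. by move=> lxy; apply: lex_ltn. Qed.

Lemma key_lt_level x y : key t E x < key t E y -> level t E x <= level t E y.
Proof.
move=> kxy; rewrite leqNgt; apply/negP => /level_lt_key kyx.
by have := ltn_trans kxy kyx; rewrite ltnn.
Qed.

Lemma up_deg_key x : peel t E n = set0 ->
  #|[set z | E x z && (key t E x < key t E z)]| <= t.
Proof.
move=> peel_n0; set l := level t E x.
have : x \notin peel t E l.+1 by rewrite mem_peel // ltnn.
rewrite inE mem_peel // leqnn /= -leqNgt; apply: leq_trans.
apply/subset_leq_card/subsetP => z; rewrite !inE => /andP[-> /key_lt_level].
by rewrite mem_peel // => ->.
Qed.

End Levels.

Section Arboricity.
Variables (n t a : nat) (G : rel 'I_n).
Hypotheses (Girr : irreflexive G) (Garb : covered_by_forests G a).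

Lemma peel_card_step j : t * #|peel t G j.+1| <= 2 * a * #|peel t G j|.
Proof.
set A := peel t G j; set A' := peel t G j.+1.
have sum_high : \sum_(v in A') t <= \sum_(v in A') deg_in G A v.
  by apply: leq_sum => v; rewrite inE => /andP[_ /ltnW].
have := @leq_sum_subset _ A' A (deg_in G A) (peel_fromS t G setT j).
have := arboricity_deg_sum Girr Garb A.
by move: sum_high; rewrite sum_nat_const mulnC; lia.
Qed.

Lemma peel_card j : t ^ j * #|peel t G j| <= (2 * a) ^ j * n.
Proof.
elim: j => [|j IH]; first by rewrite !expn0 !mul1n cardsT card_ord.
rewrite !expnS; apply: (@leq_trans (t ^ j * (2 * a * #|peel t G j|))).
  by rewrite [t * t ^ j]mulnC -mulnA leq_mul2l peel_card_step orbT.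
by rewrite mulnCA -[X in _ <= X]mulnA leq_mul2l IH orbT.
Qed.

Hypothesis a_gt0 : 0 < a.

Lemma core_deg_sum k : (2 * a) ^ k.+1 <= t ^ k ->
  \sum_(x in peel t G k) deg_in G (peel t G k) x <= n.
Proof.
move=> t_large; set S := peel t G k; set sum := \sum_(x in S) _.
have tk_gt0 : 0 < t ^ k by apply: leq_trans t_large; rewrite expn_gt0 muln_gt0 a_gt0.
have sum_le : sum <= 2 * a * #|S| by have := arboricity_deg_sum Girr Garb S; lia.
rewrite -(leq_pmul2l tk_gt0) (leq_trans (leq_mul (leqnn _) sum_le)) //.
rewrite mulnCA (leq_trans (leq_mul (leqnn _) (peel_card k))) //.
by rewrite mulnA -expnS leq_mul2r t_large orbT.
Qed.

Hypothesis t_ge : 2 * a <= t.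

Lemma exists_low_deg (U : {set 'I_n}) : U != set0 -> exists2 v, v \in U & deg_in G U v <= t.
Proof.
move=> U0; apply/exists_inP; apply: contraT => /exists_inPn high.
have : \sum_(v in U) t.+1 <= \sum_(v in U) deg_in G U v.
  by apply: leq_sum => v /high; rewrite -ltnNge.
have : 0 < #|U| by rewrite card_gt0.
have := arboricity_deg_sum Girr Garb U; rewrite U0 sum_nat_const.
have : 2 * a * #|U| <= #|U| * t by rewrite mulnC leq_mul2l t_ge orbT.
lia.
Qed.

Lemma peel_card_lt j : peel t G j != set0 -> #|peel t G j.+1| < #|peel t G j|.
Proof.
move=> /exists_low_deg [v Pv lowv]; apply/proper_card/properP.
by split; [exact: peel_fromS | exists v; rewrite // inE Pv -leqNgt].
Qed.

Lemma peel_n_eq0 : peel t G n = set0.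
Proof.
suff card_le j : #|peel t G j| <= n - j.
  by apply/eqP; rewrite -cards_eq0 -leqn0 -(subnn n) card_le.
elim: j => [|j IH]; first by rewrite subn0 cardsT card_ord.
case: (eqVneq (peel t G j) set0) => [Pj0|/peel_card_lt]; last by move: IH; lia.
have : peel t G j.+1 \subset peel t G j := peel_fromS t G setT j.
by rewrite Pj0 subset0 => /eqP->; rewrite cards0.
Qed.

End Arboricity.

(* In a cycle, the vertex of least key has two distinct neighbours of larger key. *)
Lemma unique_parent_forest n (F : rel 'I_n) (key : 'I_n -> nat) :
  symmetric F -> injective key ->
  (forall x y w, F x y -> F x w -> key x < key y -> key x < key w -> y = w) ->
  forest F.
Proof.
move=> Fsym key_inj unique_parent [s [s_size s_uniq s_cycle]].
have [x0 sx0] : exists x, x \in s.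
  by case: s s_size {s_uniq s_cycle} => [|x s] // _; exists x; rewrite inE eqxx.
case: (arg_minnP key sx0) => x sx x_min.
have key_gt y : y \in s -> y != x -> key x < key y.
  by move=> sy yx; rewrite ltn_neqAle x_min // andbT (inj_eq key_inj) eq_sym.
move: s_cycle s_uniq s_size; rewrite -(rot_cycle (index x s)) -(rot_uniq (index x s)).
rewrite -(size_rot (index x s)) (rot_index sx).
have : {subset x :: (drop (index x s).+1 s ++ take (index x s) s) <= s}.
  by move=> w; rewrite -(rot_index sx) mem_rot.
case: (drop _ _ ++ take _ _) => [|y [|z r]] // s_sub.
rewrite /cycle rcons_path => /andP[/andP[Fxy _] Flx].
set l := last x [:: y, z & r] in Flx.
have lzr : l \in z :: r by rewrite /l /= mem_last.
move=> /= /and3P[]; rewrite inE negb_or => /andP[xy xzr] yzr _ _.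
have ly : l != y by apply: contraNneq yzr => <-.
have lx : l != x by apply: contraNneq xzr => <-.
have ky : key x < key y by rewrite key_gt 1?eq_sym ?s_sub // !inE eqxx orbT.
have kl : key x < key l by rewrite key_gt ?s_sub // inE in_cons lzr !orbT.
rewrite Fsym in Flx.
by move: ly; rewrite (unique_parent x y l Fxy Flx ky kl) eqxx.
Qed.

Definition up_rank n (E : rel 'I_n) (key : 'I_n -> nat) (x y : 'I_n) :=
  #|[set z | E x z && (key x < key z) && (z < y)]|.

Definition orient n (E : rel 'I_n) (key : 'I_n -> nat) (x y : 'I_n) : nat * bool :=
  if key x < key y then (up_rank E key x y, true) else (up_rank E key y x, false).

Section Orientation.
Variables (n t : nat) (G : rel 'I_n) (key : 'I_n -> nat).
Hypotheses (Gsym : symmetric G) (Girr : irreflexive G) (key_inj : injective key).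
Hypothesis up_deg : forall x, #|[set z | G x z && (key x < key z)]| <= t.

Lemma up_rank_lt x y : G x y -> key x < key y -> up_rank G key x y < t.
Proof.
move=> Gxy kxy; apply: leq_trans (up_deg x); apply/proper_card/properP; split.
  by apply/subsetP => z; rewrite !inE => /andP[].
by exists y; rewrite !inE ?Gxy ?kxy ?ltnn ?andbF.
Qed.

Lemma up_rank_inj x y y' : G x y -> key x < key y -> G x y' -> key x < key y' ->
  up_rank G key x y = up_rank G key x y' -> y = y'.
Proof.
have up_rank_mono (u u' : 'I_n) : G x u -> key x < key u -> u < u' ->
    up_rank G key x u < up_rank G key x u'.
  move=> Gxu kxu uu'; apply/proper_card/properP; split.
    by apply/subsetP => z; rewrite !inE => /andP[-> /ltn_trans]; apply.
  by exists u; rewrite !inE ?Gxu ?kxu ?uu' ?ltnn ?andbF.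
move=> Gxy kxy Gxy' kxy' eq_rank; case: (ltngtP y y') => [yy'|y'y|/val_inj //].
- by have := up_rank_mono _ _ Gxy kxy yy'; rewrite eq_rank ltnn.
- by have := up_rank_mono _ _ Gxy' kxy' y'y; rewrite eq_rank ltnn.
Qed.

Lemma key_neq x y : G x y -> key x != key y.
Proof. by move=> Gxy; rewrite (inj_eq key_inj); apply: contraTneq Gxy => ->; rewrite Girr. Qed.

Lemma orient_sym x y : G x y ->
  (orient G key x y).1 = (orient G key y x).1 /\ (orient G key x y).2 = ~~ (orient G key y x).2.
Proof.
by move=> /key_neq; rewrite /orient neq_ltn => /orP[] kxy; rewrite kxy ltnNge ltnW.
Qed.

Lemma orient_lt x y : G x y -> (orient G key x y).1 < t.
Proof.
move=> Gxy; have := key_neq Gxy; rewrite /orient neq_ltn => /orP[] kxy.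
- by rewrite kxy /=; exact: up_rank_lt Gxy kxy.
- have Gyx : G y x by rewrite Gsym.
  by rewrite (leq_gtF (ltnW kxy)) /=; exact: up_rank_lt Gyx kxy.
Qed.

Lemma orient_unique_parent x y w : G x y -> G x w ->
  (orient G key x y).1 = (orient G key x w).1 ->
  (orient G key x y).2 -> (orient G key x w).2 -> y = w.
Proof.
rewrite /orient => Gxy Gxw; case: ifP => // kxy; case: ifP => //= kxw eq_rank _ _.
exact: up_rank_inj eq_rank.
Qed.

Lemma orient_forest i : forest (fun u v => G u v && ((orient G key u v).1 == i)).
Proof.
apply: (@unique_parent_forest _ _ key) => //.
  move=> u v; rewrite Gsym; case Guv: (G v u) => //=.
  by case: (orient_sym Guv) => ->.
move=> x y w /andP[Gxy /eqP lxy] /andP[Gxw /eqP lxw] kxy kxw.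
by apply: (orient_unique_parent Gxy Gxw); rewrite ?lxy ?lxw // /orient ?kxy ?kxw.
Qed.

End Orientation.

Lemma size_hist n (A : algorithm n) G r v : size (hist A G r v) = r.
Proof. by elim: r v => [|r IH] v //=; rewrite size_rcons IH. Qed.

Definition received n (h : history n) i (x : 'I_n) : nat := nth [ffun=> 0] h i x.

Lemma received_hist n (A : algorithm n) G r v j y : j < r ->
  received (hist A G r v) j y = send A y (nbr G y) (hist A G j y) v.
Proof.
elim: r => [|r IH] //= jr; rewrite /received nth_rcons size_hist.
case: ltnP => [jr'|rj]; first exact: IH.
have -> : j = r by apply/eqP; rewrite eqn_leq rj -ltnS jr.
by rewrite eqxx ffunE.
Qed.

(* Rounds 0..k compute the peeling sets by broadcasting membership bits; round
   k+1 sends the labels of the edges leaving the low levels; rounds k+2..k+4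
   broadcast the remaining core graph G[peel k]: each core vertex announces its
   degree, which fixes a private interval of processors to which it sends its
   adjacency list, and every processor then rebroadcasts the entry it holds. *)
Section Algorithm.
Variables (n t k : nat).
Implicit Types (u v w x p : 'I_n) (N : {ffun 'I_n -> bool}) (h : history n).

Definition announced h j x := received h j x == 1.

(* Before the core is broadcast only the first k peeling sets are known, so
   [round_level] is min(level, k); it is used only for vertices of level < k. *)
Definition round_level h x := count (fun j => announced h j x) (iota 1 k).
Definition round_key h x := round_level h x * n + x.

Definition core h := [set x | announced h k x].
Definition core_nbrs h N := [set x | announced h k x && N x].
Definition core_deg h x := received h k.+2 x.
Definition slot_start h x := \sum_(y : 'I_n | y < x) core_deg h y.
Definition slot_owner h p : option 'I_n :=
  [pick x | slot_start h x <= p < slot_start h x + core_deg h x].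

Definition peel_msg u N h : nat :=
  if size h is j.+1 then announced h j u && (t < #|[set x | announced h j x && N x]|)
  else true.
Definition label_msg u N h w : nat :=
  if ~~ announced h k u && N w && (round_key h u < round_key h w)
  then up_rank (fun _ z => N z) (round_key h) u w else 0.
Definition degree_msg u N h : nat := if announced h k u then #|core_nbrs h N| else 0.
Definition route_msg u N h p : nat :=
  if announced h k u && (slot_start h u <= p < slot_start h u + core_deg h u)
  then (nth u (enum (core_nbrs h N)) (p - slot_start h u)).+1 else 0.
(* [minn n] bounds the message whatever was received. *)
Definition relay_msg p h : nat :=
  if slot_owner h p is Some x then minn n (received h k.+3 x) else 0.

Definition round_msg d u N h w : nat :=
  match d with
  | 0 => peel_msg u N h
  | 1 => label_msg u N h w
  | 2 => degree_msg u N h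
  | 3 => route_msg u N h w
  | 4 => relay_msg u h
  | _ => 0
  end.

Definition send_alg u N h w := round_msg (size h - k) u N h w.

(* Processor p, in the slot of x, relays y.+1 for the neighbour y of x stored
   there; 0 means nothing. *)
Definition core_edge h x y : bool :=
  [&& announced h k x, announced h k y &
      [exists p, (slot_owner h p == Some x) && (received h k.+4 p == y.+1)]].

Definition local_peel h j : {set 'I_n} :=
  if j <= k then [set x | announced h j x] else peel_from t (core_edge h) (core h) (j - k).
Definition local_level h x := count (fun j => x \in local_peel h j) (iota 1 n).
Definition local_key h x := local_level h x * n + x.

Definition output_alg v N h u : nat * bool :=
  if local_key h v < local_key h u
  then (up_rank (fun _ z => N z) (local_key h) v u, true)
  else (if announced h k v && announced h k u
        then up_rank (core_edge h) (local_key h) u v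
        else received h k.+1 u, false).

Lemma send_alg_early u N h w : size h <= k -> send_alg u N h w = peel_msg u N h.
Proof. by rewrite /send_alg => /eqP->. Qed.

Lemma send_alg_late d u N h w : size h = d + k -> send_alg u N h w = round_msg d u N h w.
Proof. by rewrite /send_alg => ->; rewrite addnK. Qed.

Lemma send_alg_lt u N h w : send_alg u N h w < n.+1.
Proof.
have n_gt0 : 0 < n by apply: leq_ltn_trans (ltn_ord u).
have card_le (A : {set 'I_n}) : #|A| < n.+1 by rewrite ltnS (leq_trans (max_card _)) ?card_ord.
rewrite /send_alg; case: (size h - k) => [|[|[|[|[|d]]]]] //=.
- by rewrite /peel_msg; case: (size h) => [|j] //; case: (_ && _).
- by rewrite /label_msg; case: ifP => // _; apply: card_le.
- by rewrite /degree_msg; case: ifP => // _; apply: card_le.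
- by rewrite /route_msg; case: ifP => // _; rewrite ltnS.
- by rewrite /relay_msg; case: slot_owner => // x; rewrite ltnS geq_minl.
Qed.

End Algorithm.

Definition forest_alg n t k : algorithm n :=
  Algorithm (@send_alg n t k) (@output_alg n t k).

Lemma forest_alg_bandwidth n t k G R : bandwidth_ok (forest_alg n t k) G R 1.
Proof. by move=> r _ u v; rewrite expn1; apply: send_alg_lt. Qed.

Lemma count_leq_iota L m : count (fun j => j <= L) (iota 1 m) = minn L m.
Proof.
elim: m => [|m IH]; first by rewrite minn0.
rewrite -[m.+1]addn1 iotaD count_cat IH /= addn0 add1n.
by case: (leqP m.+1 L) => ? /=; lia.
Qed.

Lemma prefix_sum_leq n (f : 'I_n -> nat) (x : 'I_n) (P : pred 'I_n) :
  (forall z : 'I_n, z < x -> P z) -> P x ->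
  \sum_(z : 'I_n | z < x) f z + f x <= \sum_(z : 'I_n | P z) f z.
Proof.
move=> Pbelow Px; rewrite [X in _ <= X](bigD1 x) //= addnC leq_add2l.
rewrite big_mkcond [X in _ <= X]big_mkcond /=; apply: leq_sum => z _.
case: ifP => // zx; rewrite Pbelow //=; case: eqP => // zx'.
by move: zx; rewrite zx' ltnn.
Qed.

Section Simulation.
Variables (n t k : nat) (G : rel 'I_n).
Hypotheses (Gsym : symmetric G) (Girr : irreflexive G) (peel_n0 : peel t G n = set0).
Local Notation H r v := (hist (forest_alg n t k) G r v).
Local Notation S := (peel t G k).
Local Notation key := (key t G).
Local Notation level := (level t G).

Local Hint Extern 0 (is_true (_ <= _)) => lia : core.

Lemma send_peel j x w : j <= k -> send_alg t k x (nbr G x) (H j x) w = (x \in peel t G j).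
Proof.
elim: j x w => [|j IH] x w jk; rewrite send_alg_early ?size_hist // /peel_msg size_hist.
  by rewrite inE.
have ann z : announced (H j.+1 x) j z = (z \in peel t G j).
  by rewrite /announced received_hist //= IH ?(ltnW jk) //; case: (_ \in _).
rewrite inE ann; congr (nat_of_bool (_ && (t < _))).
by apply: eq_card => z; rewrite !inE ann ffunE.
Qed.

Lemma announced_hist r v j y : j <= k -> j < r -> announced (H r v) j y = (y \in peel t G j).
Proof. by move=> jk jr; rewrite /announced received_hist //= send_peel //; case: (_ \in _). Qed.

Lemma round_level_hist r v y : k < r -> round_level k (H r v) y = minn (level y) k.
Proof.
move=> kr; rewrite /round_level -count_leq_iota; apply: eq_in_count => j.
rewrite mem_iota add1n ltnS => /andP[_ jk].
by rewrite announced_hist ?mem_peel // (leq_ltn_trans jk).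
Qed.

Lemma round_key_ltE r v x z : k < r -> level x < k ->
  (round_key k (H r v) x < round_key k (H r v) z) = (key x < key z).
Proof.
move=> kr lxk; rewrite /round_key !round_level_hist // (minn_idPl (ltnW lxk)) /key.
case: (ltnP (level z) k) => [//|kz].
by rewrite !lex_ltn // (leq_trans lxk).
Qed.

Lemma send_label x w : send_alg t k x (nbr G x) (H k.+1 x) w =
  if (x \notin S) && G x w && (key x < key w) then up_rank G key x w else 0.
Proof.
rewrite (@send_alg_late _ _ _ 1) ?size_hist //; cbn [round_msg].
rewrite /label_msg announced_hist //; case Sx: (x \in S) => //; rewrite [~~ false]/= !andTb.
have lxk : level x < k by rewrite ltnNge -mem_peel // Sx.
rewrite /nbr ffunE round_key_ltE //; case: (G x w && _) => //.
by apply: eq_card => z; rewrite !inE ?ffunE round_key_ltE.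
Qed.

(* The values taken by the messages of rounds k+2..k+4 in an execution on G. *)
Definition core_deg_of (x : 'I_n) := if x \in S then deg_in G S x else 0.
Definition slot_start_of (x : 'I_n) := \sum_(y : 'I_n | y < x) core_deg_of y.
Definition slot_owner_of (p : 'I_n) : option 'I_n :=
  [pick x | slot_start_of x <= p < slot_start_of x + core_deg_of x].
Definition core_nbrs_of (x : 'I_n) := [set y in S | G x y].
Definition route_of (x p : 'I_n) : nat :=
  if (x \in S) && (slot_start_of x <= p < slot_start_of x + core_deg_of x)
  then (nth x (enum (core_nbrs_of x)) (p - slot_start_of x)).+1 else 0.
Definition relay_of (p : 'I_n) : nat :=
  if slot_owner_of p is Some x then minn n (route_of x p) else 0.

Lemma core_nbrs_hist r v x : k < r -> core_nbrs k (H r v) (nbr G x) = core_nbrs_of x.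
Proof. by move=> kr; apply/setP => y; rewrite !inE announced_hist // /nbr ffunE. Qed.

Lemma send_degree x w : send_alg t k x (nbr G x) (H k.+2 x) w = core_deg_of x.
Proof.
rewrite (@send_alg_late _ _ _ 2) ?size_hist //; cbn [round_msg].
by rewrite /degree_msg announced_hist // core_nbrs_hist.
Qed.

Lemma core_deg_hist r v y : k.+2 < r -> core_deg k (H r v) y = core_deg_of y.
Proof. by move=> kr; rewrite /core_deg received_hist //= send_degree. Qed.

Lemma slot_start_hist r v y : k.+2 < r -> slot_start k (H r v) y = slot_start_of y.
Proof. by move=> kr; apply: eq_bigr => z _; rewrite core_deg_hist. Qed.

Lemma slot_owner_hist r v p : k.+2 < r -> slot_owner k (H r v) p = slot_owner_of p.
Proof. by move=> kr; apply: eq_pick => x; rewrite slot_start_hist // core_deg_hist. Qed.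

Lemma send_route x p : send_alg t k x (nbr G x) (H k.+3 x) p = route_of x p.
Proof.
rewrite (@send_alg_late _ _ _ 3) ?size_hist //; cbn [round_msg].
rewrite /route_msg /route_of announced_hist //.
by rewrite slot_start_hist // core_deg_hist // core_nbrs_hist.
Qed.

Lemma send_relay p w : send_alg t k p (nbr G p) (H k.+4 p) w = relay_of p.
Proof.
rewrite (@send_alg_late _ _ _ 4) ?size_hist //; cbn [round_msg].
rewrite /relay_msg /relay_of slot_owner_hist //.
by case: slot_owner_of => // x; rewrite received_hist //= send_route.
Qed.

Lemma core_edge_hist v x y : core_edge k (H (k + 5) v) x y =
  [&& x \in S, y \in S & [exists p, (slot_owner_of p == Some x) && (relay_of p == y.+1)]].
Proof.
rewrite /core_edge !announced_hist //; congr [&& _, _ & _]; apply: eq_existsb => p.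
by rewrite slot_owner_hist // received_hist //= send_relay.
Qed.

Hypothesis core_small : \sum_(x in S) deg_in G S x <= n.

Lemma slot_end_leq (x : 'I_n) : slot_start_of x + core_deg_of x <= n.
Proof.
apply: leq_trans core_small; rewrite big_mkcond /=.
exact: (prefix_sum_leq core_deg_of (P := predT)).
Qed.

Lemma slot_owner_ofE (x p : 'I_n) :
  (slot_owner_of p == Some x) = (slot_start_of x <= p < slot_start_of x + core_deg_of x).
Proof.
have slots_disjoint (y z : 'I_n) : y < z -> slot_start_of y + core_deg_of y <= slot_start_of z.
  by move=> yz; apply: prefix_sum_leq => // w /ltn_trans; apply.
rewrite /slot_owner_of; case: pickP => [y /andP[py1 py2]|none]; last by rewrite none.
apply/eqP/idP => [[<-]|/andP[px1 px2]]; first by rewrite py1.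
congr Some; case: (ltngtP y x) => [yx|xy|/val_inj //].
- by have := slots_disjoint _ _ yx; lia.
- by have := slots_disjoint _ _ xy; lia.
Qed.

Lemma core_nbrs_card (x : 'I_n) : x \in S -> #|core_nbrs_of x| = core_deg_of x.
Proof. by move=> Sx; rewrite /core_deg_of Sx. Qed.

Lemma relay_sound (x y p : 'I_n) :
  x \in S -> slot_owner_of p == Some x -> relay_of p == y.+1 -> G x y.
Proof.
move=> Sx /[dup] owner; rewrite slot_owner_ofE => slot.
rewrite /relay_of (eqP owner) /route_of Sx slot; set m := nth _ _ _.
rewrite (minn_idPr (ltn_ord m)) eqSS => /eqP/val_inj my.
have : m \in enum (core_nbrs_of x).
  by apply: mem_nth; rewrite -cardE core_nbrs_card //; lia.
by rewrite -my mem_enum inE => /andP[].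
Qed.

Lemma relay_complete (x y : 'I_n) : x \in S -> y \in S -> G x y ->
  exists p, (slot_owner_of p == Some x) && (relay_of p == y.+1).
Proof.
move=> Sx Sy Gxy; have nbr_y : y \in core_nbrs_of x by rewrite inE Sy.
set i := index y (enum (core_nbrs_of x)).
have i_lt : i < core_deg_of x by rewrite -core_nbrs_card // cardE index_mem mem_enum.
have p_lt : slot_start_of x + i < n by have := slot_end_leq x; lia.
have owner : slot_owner_of (Ordinal p_lt) == Some x by rewrite slot_owner_ofE /=; lia.
exists (Ordinal p_lt); rewrite owner /relay_of (eqP owner) /route_of Sx /=.
rewrite leq_addr ltn_add2l i_lt addKn nth_index ?mem_enum //.
by rewrite (minn_idPr (ltn_ord y)).
Qed.

Lemma core_edge_correct (v x y : 'I_n) :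
  x \in S -> y \in S -> core_edge k (H (k + 5) v) x y = G x y.
Proof.
move=> Sx Sy; rewrite core_edge_hist Sx Sy /=.
apply/existsP/idP => [[p /andP[]]|/(relay_complete Sx Sy)//].
exact: relay_sound.
Qed.

Lemma local_peel_hist v j : local_peel t k (H (k + 5) v) j = peel t G j.
Proof.
rewrite /local_peel; case: leqP => [jk|kj]; first by apply/setP => y; rewrite inE announced_hist.
have -> : core k (H (k + 5) v) = S by apply/setP => y; rewrite inE announced_hist.
rewrite (@eq_peel_from _ _ _ G) => [|x y Sx Sy]; last exact: core_edge_correct.
by rewrite -peel_fromD subnKC // ltnW.
Qed.

Lemma local_key_hist v x : local_key t k (H (k + 5) v) x = key x.
Proof.
rewrite /local_key /local_level /key /level; congr (_ * _ + _).
by apply: eq_count => j; rewrite local_peel_hist.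
Qed.

Lemma output_correct v u : G v u -> out (forest_alg n t k) G (k + 5) v u = orient G key v u.
Proof.
move=> Gvu; rewrite /out /= /output_alg !local_key_hist /orient.
case: ifP => [kvu|kvu].
  by congr (_, _); apply: eq_card => z; rewrite !inE /nbr ffunE !local_key_hist.
have kuv : key u < key v.
  by move: (key_neq Girr (@key_inj n t G) Gvu); rewrite neq_ltn kvu.
have in_core_above x y : x \in S -> key x < key y -> y \in S.
  by move=> + /key_lt_level; rewrite !mem_peel //; apply: leq_trans.
congr (_, _); rewrite !announced_hist //; case: ifP => [/andP[Sv Su]|notS].
  apply: eq_card => z; rewrite !inE !local_key_hist.
  case: (ltnP (key u) (key z)) => [kuz|]; last by rewrite !andbF.
  by rewrite core_edge_correct // (in_core_above u).
have Su : u \notin S by apply: contraFN notS => Su; rewrite Su (in_core_above u).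
by rewrite received_hist //= send_label Su Gsym Gvu kuv.
Qed.

End Simulation.

Lemma forest_alg_correct n t a k (G : rel 'I_n) :
  symmetric G -> irreflexive G -> covered_by_forests G a -> 0 < a ->
  (2 * a) ^ k.+1 <= t ^ k -> 2 * a <= t ->
  bandwidth_ok (forest_alg n t k) G (k + 5) 1 /\
  forest_decomposition_ok (forest_alg n t k) G (k + 5) t.
Proof.
move=> Gsym Girr Garb a_gt0 t_pow t_ge; split; first exact: forest_alg_bandwidth.
have peel_n0 := peel_n_eq0 Girr Garb a_gt0 t_ge.
have out_eq := output_correct Gsym Girr peel_n0 (core_deg_sum Girr Garb a_gt0 t_pow).
have up_deg x := up_deg_key x peel_n0.
have key_inj := @key_inj n t G.
split.
- move=> v u Gvu; rewrite out_eq //.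
  exact: (@orient_lt n t G (key t G) Gsym Girr key_inj up_deg _ _ Gvu).
- move=> v u Gvu; have Guv : G u v by rewrite Gsym.
  by rewrite !out_eq //; exact: (@orient_sym n G (key t G) Girr key_inj _ _ Gvu).
- by move=> v u w Gvu Gvw; rewrite !out_eq //; exact: orient_unique_parent.
- move=> i; apply: (eq_forest (orient_forest Gsym Girr key_inj (i := i)) _) => u v.
  by case Guv: (G u v) => //; rewrite out_eq.
Qed.

Lemma threshold_exists a k : exists t, (2 * a) ^ k.+2 <= t ^ k.+1.
Proof.
exists ((2 * a) ^ k.+2); case: ((2 * a) ^ k.+2) => [|x] //.
by rewrite expnS leq_pmulr // expn_gt0.
Qed.

Definition threshold a k := ex_minn (threshold_exists a k).

Lemma threshold_large a k : (2 * a) ^ k.+2 <= threshold a k ^ k.+1.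
Proof. by rewrite /threshold; case: ex_minnP. Qed.

Lemma threshold_pred_lt a k : 0 < a -> (threshold a k).-1 ^ k.+1 < (2 * a) ^ k.+2.
Proof.
rewrite /threshold => a_gt0; case: ex_minnP => -[|t] t_large t_min.
  by move: t_large; rewrite exp0n // leqn0 expn_eq0; lia.
by rewrite ltnNge; apply/negP => /t_min; rewrite ltnn.
Qed.

Lemma threshold_ge a k : 0 < a -> 2 * a <= threshold a k.
Proof.
move=> a_gt0; rewrite leqNgt; apply/negP => small.
have : threshold a k ^ k.+1 < (2 * a) ^ k.+2.
  apply: (@leq_ltn_trans ((2 * a) ^ k.+1)); first by rewrite leq_exp2r // ltnW.
  by rewrite ltn_exp2l //; lia.
by rewrite ltnNge threshold_large.
Qed.

From Stdlib Require Import Reals Lra.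

Lemma INR_expn m e : INR (expn m e) = (INR m ^ e)%R.
Proof. by elim: e => [|e IH] //; rewrite expnS mult_INR IH. Qed.

Lemma INR_le_Rpower x y m : (expn x m.+1 < expn y m.+2)%N -> (0 < y)%N ->
  (INR x <= Rpower (INR y) (1 + / INR m.+1))%R.
Proof.
move=> xy y_gt0; apply: Rnot_lt_le => big_x.
have m_pos : (0 < INR m.+1)%R by apply: lt_0_INR; apply/ltP.
have y_pos : (0 < INR y)%R by apply: lt_0_INR; apply/ltP.
have := Rlt_Rpower_l _ _ _ m_pos (conj (exp_pos _) big_x).
rewrite Rpower_mult (_ : ((1 + / INR m.+1) * INR m.+1 = INR m.+2)%R); last first.
  by rewrite [INR m.+2]S_INR; field; lra.
rewrite !Rpower_pow //; last exact: Rlt_trans (exp_pos _) big_x.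
rewrite -!INR_expn => /INR_lt/ltP.
by rewrite ltnNge ltnW.
Qed.

Lemma threshold_real_bound a k eps : (2 <= a)%N -> (/ INR k.+1 <= eps)%R ->
  (INR (threshold a k) <= 5 * Rpower (INR a) (1 + eps))%R.
Proof.
move=> a_ge2 k_eps; set t := threshold a k; set e := (1 + / INR k.+1)%R.
have a_gt0 : (0 < a)%N by apply: leq_trans a_ge2.
have a_R : (2 <= INR a)%R by apply: (le_INR 2); apply/leP.
have k_R : (1 <= INR k.+1)%R by apply: (le_INR 1); apply/leP.
have inv_le1 : (/ INR k.+1 <= 1)%R by rewrite -Rinv_1; apply: Rinv_le_contravar; lra.
have e_le2 : (e <= 2)%R by rewrite /e; lra.
have e_le : (e <= 1 + eps)%R by rewrite /e; lra.
have t_pred : (INR t.-1 <= Rpower (INR (2 * a)) e)%R.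
  by apply: INR_le_Rpower; [exact: threshold_pred_lt | rewrite muln_gt0].
have split_pow : Rpower (INR (2 * a)) e = (Rpower 2 e * Rpower (INR a) e)%R.
  by rewrite mult_INR Rpower_mult_distr //=; lra.
have two_pow : (Rpower 2 e <= 4)%R.
  rewrite (_ : 4 = Rpower 2 (INR 2))%R; last by rewrite Rpower_pow /=; lra.
  by apply: Rle_Rpower; rewrite /=; lra.
have a_pow : (Rpower (INR a) e <= Rpower (INR a) (1 + eps))%R by apply: Rle_Rpower; lra.
have one_le : (1 <= Rpower (INR a) (1 + eps))%R.
  have inv_pos : (0 < / INR k.+1)%R by apply: Rinv_0_lt_compat; lra.
  by rewrite -{1}(Rpower_O (INR a)); [apply: Rle_Rpower|]; lra.
have t_gt0 : (0 < t)%N by apply: leq_trans (threshold_ge k a_gt0); rewrite muln_gt0.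
have -> : INR t = (INR t.-1 + 1)%R by rewrite -S_INR prednK.
have := Rmult_le_compat _ _ _ _ (Rlt_le _ _ (exp_pos _)) (Rlt_le _ _ (exp_pos _)) two_pow a_pow.
rewrite /Rpower in split_pow t_pred one_le *; lra.
Qed.

Theorem mainTheorem9 :
  forall eps : R, (0 < eps)%R ->
  exists (C : R) (Rounds c : nat),
  forall n a : nat, (2 <= a)%N ->
  exists (A : algorithm n) (K : nat),
    (INR K <= C * Rpower (INR a) (1 + eps))%R /\
    forall G : rel 'I_n, symmetric G -> irreflexive G -> has_arboricity G a ->
      bandwidth_ok A G Rounds c /\ forest_decomposition_ok A G Rounds K.
Proof.
move=> eps eps_gt0.
have [[|k] [k_eps /ltP k_gt0]] := archimed_cor1 eps eps_gt0; first by [].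
exists 5%R, (k.+1 + 5), 1 => n a a_ge2.
have a_gt0 : (0 < a)%N by apply: leq_trans a_ge2.
exists (forest_alg n (threshold a k) k.+1), (threshold a k); split.
  by apply: threshold_real_bound; last exact: Rlt_le.
move=> G Gsym Girr [Garb _].
exact: forest_alg_correct Gsym Girr Garb a_gt0 (threshold_large a k) (threshold_ge k a_gt0).
Qed.
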